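(* 1. $\sup_{0\le x_1<\ell_\varepsilon}|\mu_\varepsilon(x_1)-\mu_0(x_1)|\to0$ as $\varepsilon\to0^+$. 2. There exist $\varepsilon_0>0$ and positive constants $C_1,C_2,C_3$ depending only on $\alpha,\kappa,\delta$ such that for every $0\le\varepsilon\le\varepsilon_0$ and every $x_1\in[0,\ell_\varepsilon)$: $$|\mu_\varepsilon(x_1)|\le C_1(1+x_1)^{-1/\alpha},\qquad |H_\varepsilon(\mu_\varepsilon(x_1))|\le C_2(1+x_1)^{-1-1/\alpha},\qquad |H_0'(\mu_\varepsilon(x_1))|\le C_3(1+x_1)^{-1}.$$
   Context: Fix $\kappa>0$, $\alpha>0$, $\delta<0$. For $\varepsilon\ge0$ let $H_\varepsilon(s)=\kappa|s|^{1+\alpha}+\varepsilon$, $\rho_\varepsilon(\xi_1)=\int_\delta^{\xi_1}ds/H_\varepsilon(s)$ for $\delta\le\xi_1<0$, $\ell_\varepsilon=\lim_{\xi_1\to0^-}\rho_\varepsilon(\xi_1)$ (finite for $\varepsilon>0$, $\ell_0=+\infty$), and $\mu_\varepsilon:=\rho_\varepsilon^{-1}:[0,\ell_\varepsilon)\to[\delta,0)$. Explicitly $\mu_0(x_1)=-(\alpha\kappa)^{-1/\alpha}(x_1+\hat x_1)^{-1/\alpha}$ with $\hat x_1=(\alpha\kappa)^{-1}|\delta|^{-\alpha}$. *)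

From Stdlib Require Import Reals ClassicalEpsilon.
From Coquelicot Require Import Coquelicot.
Open Scope R_scope.

(* |s|^a for real a > 0, with the convention 0^a = 0 (Stdlib's Rpower 0 a = 1). *)
Definition powabs (s a : R) : R :=
  if Req_EM_T s 0 then 0 else Rpower (Rabs s) a.

Definition H (kappa alpha eps s : R) : R := kappa * powabs s (1 + alpha) + eps.

Definition rho (kappa alpha delta eps xi : R) : R :=
  RInt (fun s => / H kappa alpha eps s) delta xi.

(* ell_eps = lim_{xi -> 0^-} rho_eps(xi), in the extended reals (+oo for eps = 0). *)
Definition ell (kappa alpha delta eps : R) : Rbar :=
  epsilon (inhabits p_infty)
    (fun l => filterlim (rho kappa alpha delta eps) (at_left 0) (Rbar_locally l)).

Definition mu (kappa alpha delta eps x : R) : R :=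
  epsilon (inhabits 0)
    (fun xi => delta <= xi < 0 /\ rho kappa alpha delta eps xi = x).

(* Since H_eps >= H_0, rho_eps <= rho_0 and hence mu_eps >= mu_0, where
   mu_0(x) = -(alpha kappa x + |delta|^(-alpha))^(-1/alpha) is explicit.  This comparison
   bounds every power of |mu_eps| by the corresponding power of (1 + x)^(-1/alpha), which gives
   the bounds on |mu_eps|, on kappa |mu_eps|^(1+alpha) and on H_0'(mu_eps).  The remaining term
   eps of H_eps(mu_eps) is controlled by ell_eps = O(eps^(-alpha/(1+alpha))), obtained by
   splitting the integral rho_eps at -eps^(1/(1+alpha)).
   For the uniform convergence: where mu_0(x) > -eta both mu_0(x) and mu_eps(x) lie in
   (-eta, 0); otherwise 1/H_0 - 1/H_eps = O(eps) on [delta, mu_0(x)], so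
   rho_eps(mu_0 x) = x - O(eps), and the slope of rho_eps, bounded below, gives
   mu_eps(x) - mu_0(x) = O(eps). *)

From Stdlib Require Import Reals Lra ClassicalEpsilon.
From Coquelicot Require Import Coquelicot.
Open Scope R_scope.

Lemma Rpower_pos x a : 0 < Rpower x a.
Proof. apply exp_pos. Qed.

Lemma Rpower_1_l a : Rpower 1 a = 1.
Proof. unfold Rpower; rewrite ln_1, Rmult_0_r; apply exp_0. Qed.

Lemma Rpower_Ropp_le_contravar u v c :
  0 <= c -> 0 < u <= v -> Rpower v (- c) <= Rpower u (- c).
Proof.
  intros hc huv; rewrite !Rpower_Ropp.
  apply Rinv_le_contravar; [apply Rpower_pos | apply Rle_Rpower_l; auto].
Qed.

Lemma Rpower_Rpower_inv x a : 0 < x -> a <> 0 -> Rpower (Rpower x a) (/ a) = x.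
Proof. intros hx ha; rewrite Rpower_mult, Rinv_r by auto; apply Rpower_1, hx. Qed.

Lemma Rinv_sub_le a b e : 0 < b <= a -> 0 <= e -> / a - / (a + e) <= e / (b * b).
Proof.
  intros hab he.
  replace (/ a - / (a + e)) with (e / (a * (a + e))) by (field; lra).
  apply Rmult_le_compat_l; auto; apply Rinv_le_contravar; nra.
Qed.

Lemma is_derive_Rpower_opp b x :
  x < 0 -> is_derive (fun s => Rpower (- s) b) x (- (b * Rpower (- x) (b - 1))).
Proof.
  intros hx.
  assert (hpow : is_derive (fun y => Rpower y b) (- x) (b * Rpower (- x) (b - 1)))
    by (apply is_derive_Reals, derivable_pt_lim_power; lra).
  pose proof (is_derive_comp _ _ x _ _ hpow
                (is_derive_opp (fun t : R => t) x one (is_derive_id x))) as h.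
  simpl in h; unfold scal, opp, one in h; simpl in h; unfold mult in h; simpl in h.
  replace (- (b * Rpower (- x) (b - 1))) with (- (1) * (b * Rpower (- x) (b - 1))) by ring.
  exact h.
Qed.

Lemma RInt_ge_const f a b c :
  a <= b -> ex_RInt f a b -> (forall x, a < x < b -> c <= f x) -> c * (b - a) <= RInt f a b.
Proof.
  intros hab hf hc; replace (c * (b - a)) with (RInt (fun _ => c) a b).
  - apply RInt_le; auto; apply ex_RInt_const.
  - rewrite RInt_const; unfold scal; simpl; unfold mult; simpl; ring.
Qed.

Lemma RInt_le_const f a b c :
  a <= b -> ex_RInt f a b -> (forall x, a < x < b -> f x <= c) -> RInt f a b <= c * (b - a).
Proof.
  intros hab hf hc; replace (c * (b - a)) with (RInt (fun _ => c) a b).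
  - apply RInt_le; auto; apply ex_RInt_const.
  - rewrite RInt_const; unfold scal; simpl; unfold mult; simpl; ring.
Qed.

Lemma powabs_0 a : powabs 0 a = 0.
Proof. unfold powabs; destruct (Req_EM_T 0 0); [reflexivity | contradiction]. Qed.

Lemma powabs_neq0 s a : s <> 0 -> powabs s a = Rpower (Rabs s) a.
Proof. intros hs; unfold powabs; destruct (Req_EM_T s 0); [contradiction | reflexivity]. Qed.

Lemma powabs_neg s a : s < 0 -> powabs s a = Rpower (- s) a.
Proof. intros hs; rewrite powabs_neq0, Rabs_left by lra; reflexivity. Qed.

Lemma powabs_ge0 s a : 0 <= powabs s a.
Proof. unfold powabs; destruct (Req_EM_T s 0); [lra | left; apply Rpower_pos]. Qed.

Lemma powabs_le_Rabs s a : 1 <= a -> Rabs s <= 1 -> powabs s a <= Rabs s.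
Proof.
  intros ha hs; destruct (Req_EM_T s 0) as [->|hs0]; [rewrite powabs_0; apply Rabs_pos|].
  assert (hpos : 0 < Rabs s) by (apply Rabs_pos_lt, hs0).
  rewrite powabs_neq0 by auto; replace a with (1 + (a - 1)) by ring.
  rewrite Rpower_plus, Rpower_1 by auto.
  assert (Rpower (Rabs s) (a - 1) <= 1)
    by (rewrite <- (Rpower_1_l (a - 1)) at 2; apply Rle_Rpower_l; lra).
  pose proof (Rpower_pos (Rabs s) (a - 1)); nra.
Qed.

Lemma continuous_powabs a s : 1 <= a -> continuous (fun s => powabs s a) s.
Proof.
  intros ha; destruct (Req_EM_T s 0) as [->|hs].
  - apply continuity_pt_filterlim, continuity_pt_locally; intros e.
    exists (mkposreal _ (Rmin_pos 1 e Rlt_0_1 (cond_pos e))); intros y hy.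
    change (Rabs (y + - 0) < Rmin 1 e) in hy; rewrite Ropp_0, Rplus_0_r in hy.
    rewrite powabs_0, Rminus_0_r, Rabs_pos_eq by apply powabs_ge0.
    pose proof (Rmin_l 1 e); pose proof (Rmin_r 1 e).
    apply Rle_lt_trans with (Rabs y); [apply powabs_le_Rabs|]; lra.
  - apply (continuous_ext_loc _ (fun y => exp (a * ln (Rabs y)))).
    + apply (filter_imp (fun y => y <> 0)); [|exact (open_neq 0 s hs)].
      intros y hy; rewrite powabs_neq0 by auto; reflexivity.
    + apply continuous_exp_comp, (continuous_mult (fun _ => a)); [apply continuous_const|].
      apply (continuous_comp Rabs ln); [apply continuous_Rabs|].
      apply continuous_ln, Rabs_pos_lt, hs.
Qed.

Section Profile.

Variables kappa alpha delta : R.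
Hypotheses (hkappa : 0 < kappa) (halpha : 0 < alpha) (hdelta : delta < 0).

Lemma H_pos eps s : 0 <= eps -> s <> 0 \/ 0 < eps -> 0 < H kappa alpha eps s.
Proof.
  intros he hs; unfold H; destruct hs as [hs|hs].
  - rewrite powabs_neq0 by auto; pose proof (Rpower_pos (Rabs s) (1 + alpha)); nra.
  - pose proof (powabs_ge0 s (1 + alpha)); nra.
Qed.

Lemma Rinv_H_le eps s : 0 < eps -> / H kappa alpha eps s <= / eps.
Proof.
  intros he; apply Rinv_le_contravar; auto.
  unfold H; pose proof (powabs_ge0 s (1 + alpha)); nra.
Qed.

Lemma continuous_Rinv_H eps s :
  0 <= eps -> s <> 0 \/ 0 < eps -> continuous (fun s => / H kappa alpha eps s) s.
Proof.
  intros he hs; apply continuous_Rinv_comp; [|apply Rgt_not_eq, H_pos; auto].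
  apply (continuous_plus (fun s => kappa * powabs s (1 + alpha)) (fun _ => eps));
    [|apply continuous_const].
  apply (continuous_mult (fun _ => kappa)); [apply continuous_const|].
  apply continuous_powabs; lra.
Qed.

Lemma ex_RInt_Rinv_H eps a b :
  0 <= eps -> (a < 0 /\ b < 0) \/ 0 < eps -> ex_RInt (fun s => / H kappa alpha eps s) a b.
Proof.
  intros he hab; apply (ex_RInt_continuous (V := R_CompleteNormedModule)).
  intros z hz; apply continuous_Rinv_H; auto.
  destruct hab as [[ha hb]|hab]; [left | right; auto].
  pose proof (Rmax_lub_lt a b 0 ha hb); lra.
Qed.

Lemma rho_sub eps a b : 0 <= eps -> (a < 0 /\ b < 0) \/ 0 < eps ->
  rho kappa alpha delta eps b - rho kappa alpha delta eps a
  = RInt (fun s => / H kappa alpha eps s) a b.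
Proof.
  intros he hab; unfold rho; rewrite <- (RInt_Chasles _ delta a b).
  - unfold plus; simpl; ring.
  - apply ex_RInt_Rinv_H; auto; destruct hab as [[ha hb]|hab]; [left|right]; auto.
  - apply ex_RInt_Rinv_H; auto.
Qed.

Definition Hbound eps := kappa * Rpower (- delta) (1 + alpha) + eps.

Lemma Hbound_pos eps : 0 <= eps -> 0 < Hbound eps.
Proof. intros he; unfold Hbound; pose proof (Rpower_pos (- delta) (1 + alpha)); nra. Qed.

Lemma H_le_Hbound eps s : delta <= s <= 0 -> H kappa alpha eps s <= Hbound eps.
Proof.
  intros hs; unfold H, Hbound; apply Rplus_le_compat_r, Rmult_le_compat_l; [lra|].
  destruct (Req_EM_T s 0) as [->|hs0].
  - rewrite powabs_0; left; apply Rpower_pos.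
  - rewrite powabs_neg by lra; apply Rle_Rpower_l; lra.
Qed.

Lemma rho_sub_ge eps a b : 0 <= eps -> delta <= a <= b -> b < 0 ->
  (b - a) / Hbound eps <= rho kappa alpha delta eps b - rho kappa alpha delta eps a.
Proof.
  intros he hab hb; rewrite rho_sub by (auto; lra).
  unfold Rdiv; rewrite Rmult_comm; apply RInt_ge_const; [lra | apply ex_RInt_Rinv_H; auto; lra|].
  intros s hs; apply Rinv_le_contravar; [apply H_pos; auto; lra | apply H_le_Hbound; lra].
Qed.

Lemma rho_inj eps a b : 0 <= eps -> delta <= a < 0 -> delta <= b < 0 ->
  rho kappa alpha delta eps a = rho kappa alpha delta eps b -> a = b.
Proof.
  intros he ha hb e.
  assert (hle : forall u v, delta <= u <= v -> v < 0 ->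
            rho kappa alpha delta eps u = rho kappa alpha delta eps v -> v <= u).
  { intros u v huv hv euv; pose proof (rho_sub_ge eps u v he huv hv) as hs.
    rewrite euv, Rminus_diag in hs.
    pose proof (Rinv_0_lt_compat _ (Hbound_pos eps he)); unfold Rdiv in hs; nra. }
  destruct (Rle_or_lt a b).
  - apply Rle_antisym; auto; apply hle; auto; lra.
  - apply Rle_antisym; [apply hle | ]; auto; lra.
Qed.

Lemma mu_rho eps x xi : 0 <= eps -> delta <= xi < 0 ->
  rho kappa alpha delta eps xi = x -> mu kappa alpha delta eps x = xi.
Proof.
  intros he hxi hr; unfold mu.
  match goal with |- epsilon ?i ?P = _ =>
    destruct (epsilon_spec i P (ex_intro _ xi (conj hxi hr))) as [h1 h2] end.
  apply (rho_inj eps); auto; congruence.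
Qed.

Lemma rho_le_rho0 eps xi : 0 <= eps -> delta <= xi < 0 ->
  rho kappa alpha delta eps xi <= rho kappa alpha delta 0 xi.
Proof.
  intros he hxi; unfold rho; apply RInt_le; [lra | apply ex_RInt_Rinv_H; auto; lra
    | apply ex_RInt_Rinv_H; lra|].
  intros s hs; apply Rinv_le_contravar; [apply H_pos; lra | unfold H; lra].
Qed.

Lemma rho0_eq xi : delta <= xi < 0 -> rho kappa alpha delta 0 xi
  = (Rpower (- xi) (- alpha) - Rpower (- delta) (- alpha)) / (alpha * kappa).
Proof.
  intros hxi; unfold rho; apply is_RInt_unique.
  set (F s := / (alpha * kappa) * Rpower (- s) (- alpha)).
  replace ((Rpower (- xi) (- alpha) - Rpower (- delta) (- alpha)) / (alpha * kappa))
    with (minus (F xi) (F delta)) by (unfold F, minus, plus, opp; simpl; field; lra).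
  apply (is_RInt_derive (V := R_CompleteNormedModule)); intros s hs;
    rewrite Rmin_left, Rmax_right in hs by lra.
  - replace (/ H kappa alpha 0 s)
      with (/ (alpha * kappa) * - (- alpha * Rpower (- s) (- alpha - 1))).
    + apply is_derive_scal, is_derive_Rpower_opp; lra.
    + unfold H; rewrite powabs_neg, Rplus_0_r by lra.
      replace (- alpha - 1) with (- (1 + alpha)) by ring; rewrite Rpower_Ropp.
      pose proof (Rpower_pos (- s) (1 + alpha)); field; lra.
  - apply continuous_Rinv_H; lra.
Qed.

Definition mu0_base x := alpha * kappa * x + Rpower (- delta) (- alpha).

Definition mu0 x := - Rpower (mu0_base x) (- / alpha).

Lemma mu0_base_ge x : 0 <= x -> Rpower (- delta) (- alpha) <= mu0_base x.
Proof. intros hx; unfold mu0_base; pose proof (Rmult_le_pos (alpha * kappa) x); nra. Qed.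

Lemma mu0_range x : 0 <= x -> delta <= mu0 x < 0.
Proof.
  intros hx; unfold mu0; pose proof (Rpower_pos (mu0_base x) (- / alpha)); split; [|lra].
  assert (Rpower (mu0_base x) (- / alpha) <= - delta); [|lra].
  rewrite <- (Rpower_Rpower_inv (- delta) (- alpha)), Rinv_opp by lra.
  apply Rpower_Ropp_le_contravar.
  - left; apply Rinv_0_lt_compat, halpha.
  - split; [apply Rpower_pos | apply mu0_base_ge, hx].
Qed.

Lemma rho0_mu0 x : 0 <= x -> rho kappa alpha delta 0 (mu0 x) = x.
Proof.
  intros hx; rewrite rho0_eq by (apply mu0_range, hx).
  unfold mu0; rewrite Ropp_involutive, Rpower_mult.
  replace (- / alpha * - alpha) with 1 by (field; lra).
  rewrite Rpower_1
    by (pose proof (mu0_base_ge x hx); pose proof (Rpower_pos (- delta) (- alpha)); lra).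
  unfold mu0_base; field; lra.
Qed.

Lemma mu0_eq x : 0 <= x -> mu kappa alpha delta 0 x = mu0 x.
Proof. intros hx; apply mu_rho; [lra | apply mu0_range | apply rho0_mu0]; auto. Qed.


Lemma rho_lipschitz eps a b : 0 < eps ->
  Rabs (rho kappa alpha delta eps b - rho kappa alpha delta eps a) <= Rabs (b - a) / eps.
Proof.
  intros he.
  assert (hle : forall u v, u <= v ->
    Rabs (rho kappa alpha delta eps v - rho kappa alpha delta eps u) <= Rabs (v - u) / eps).
  { intros u v huv; rewrite rho_sub, (Rabs_pos_eq (v - u)) by lra.
    apply abs_RInt_le_const; [lra | apply ex_RInt_Rinv_H; lra|].
    intros s _; rewrite Rabs_pos_eq by (left; apply Rinv_0_lt_compat, H_pos; lra).
    apply Rinv_H_le, he. }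
  destruct (Rle_or_lt a b); [apply hle; lra|].
  rewrite Rabs_minus_sym, (Rabs_minus_sym b); apply hle; lra.
Qed.

Lemma continuous_rho eps y : 0 < eps -> continuous (rho kappa alpha delta eps) y.
Proof.
  intros he; apply continuity_pt_filterlim, continuity_pt_locally; intros e.
  exists (mkposreal _ (Rmult_lt_0_compat _ _ (cond_pos e) he)); intros u hu.
  change (Rabs (u + - y) < e * eps) in hu.
  apply Rle_lt_trans with (Rabs (u - y) / eps); [apply rho_lipschitz, he|].
  apply Rmult_lt_reg_r with eps; auto; unfold Rdiv.
  rewrite Rmult_assoc, Rinv_l, Rmult_1_r by lra; exact hu.
Qed.

Lemma ell_limit eps : 0 < eps ->
  filterlim (rho kappa alpha delta eps) (at_left 0) (Rbar_locally (ell kappa alpha delta eps)).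
Proof.
  intros he; unfold ell.
  match goal with |- context [epsilon ?i ?P] => apply (epsilon_spec i P) end.
  exists (Finite (rho kappa alpha delta eps 0)).
  apply (filterlim_filter_le_1 _ (filter_le_within (F := locally 0) _)), continuous_rho, he.
Qed.

Lemma lt_ell_rho eps (x : R) : 0 < eps -> Rbar_lt x (ell kappa alpha delta eps) ->
  exists xi, delta < xi < 0 /\ x < rho kappa alpha delta eps xi.
Proof.
  intros he hx.
  pose proof (ell_limit eps he _ (open_Rbar_gt' _ _ hx)) as hnear.
  assert (hleft : at_left 0 (fun u => delta < u < 0)).
  { unfold at_left, within; apply (filter_imp (fun u => delta < u));
      [intros u hu hu0; split; auto | exact (open_gt delta 0 hdelta)]. }
  destruct (filter_ex _ (filter_and (fun u => Rbar_lt x (rho kappa alpha delta eps u))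
                                      _ hnear hleft)) as [xi [hr hxi]].
  exists xi; auto.
Qed.

Lemma mu_spec eps (x : R) : 0 <= eps -> 0 <= x -> Rbar_lt x (ell kappa alpha delta eps) ->
  delta <= mu kappa alpha delta eps x < 0
  /\ rho kappa alpha delta eps (mu kappa alpha delta eps x) = x.
Proof.
  intros he hx hl; destruct he as [he| <-].
  - destruct (lt_ell_rho eps x he hl) as [xi' [hxi' hr]].
    destruct (IVT_cor (fun t => rho kappa alpha delta eps t - x) delta xi') as [xi [hxi e]].
    + intros t; apply continuity_pt_minus; [|apply continuity_pt_const; intros ? ?; auto].
      apply continuity_pt_filterlim, continuous_rho, he.
    + lra.
    + replace (rho kappa alpha delta eps delta) with 0
        by (unfold rho; rewrite RInt_point; reflexivity); nra.
    + rewrite (mu_rho eps x xi) by lra; split; lra.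
  - rewrite mu0_eq by auto; split; [apply mu0_range | apply rho0_mu0]; auto.
Qed.

Lemma mu0_le_mu eps (x : R) : 0 <= eps -> 0 <= x -> Rbar_lt x (ell kappa alpha delta eps) ->
  mu0 x <= mu kappa alpha delta eps x.
Proof.
  intros he hx hl; destruct (mu_spec eps x he hx hl) as [hxi e].
  pose proof (mu0_range x hx); apply Rnot_lt_le; intros hlt.
  pose proof (rho_sub_ge 0 (mu kappa alpha delta eps x) (mu0 x) (Rle_refl 0)
                ltac:(lra) ltac:(lra)) as hs.
  rewrite rho0_mu0 in hs by auto.
  pose proof (rho_le_rho0 eps (mu kappa alpha delta eps x) he hxi).
  pose proof (Rinv_0_lt_compat _ (Hbound_pos 0 (Rle_refl 0))); unfold Rdiv in hs; nra.
Qed.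

Definition mu0_coef := Rmin (alpha * kappa) (Rpower (- delta) (- alpha)).

Lemma mu0_coef_pos : 0 < mu0_coef.
Proof. apply Rmin_pos; [nra | apply Rpower_pos]. Qed.

Lemma mu0_base_ge_coef x : 0 <= x -> mu0_coef * (1 + x) <= mu0_base x.
Proof.
  intros hx; unfold mu0_coef, mu0_base.
  pose proof (Rmin_l (alpha * kappa) (Rpower (- delta) (- alpha))).
  pose proof (Rmin_r (alpha * kappa) (Rpower (- delta) (- alpha))); nra.
Qed.

Lemma Rpower_opp_mu_le eps (x : R) c :
  0 <= eps -> 0 <= x -> Rbar_lt x (ell kappa alpha delta eps) -> 0 <= c ->
  Rpower (- mu kappa alpha delta eps x) c
  <= Rpower mu0_coef (- (c / alpha)) * Rpower (1 + x) (- (c / alpha)).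
Proof.
  intros he hx hl hc.
  pose proof (mu0_le_mu eps x he hx hl); destruct (mu_spec eps x he hx hl) as [hxi _].
  apply Rle_trans with (Rpower (- mu0 x) c).
  - apply Rle_Rpower_l; [auto | lra].
  - unfold mu0; rewrite Ropp_involutive, Rpower_mult, Rpower_mult_distr
      by (lra || apply mu0_coef_pos).
    replace (- / alpha * c) with (- (c / alpha)) by (unfold Rdiv; ring).
    apply Rpower_Ropp_le_contravar.
    + unfold Rdiv; pose proof (Rinv_0_lt_compat _ halpha); nra.
    + pose proof mu0_coef_pos; split; [nra | apply mu0_base_ge_coef, hx].
Qed.

Lemma Rabs_mu_le eps (x : R) :
  0 <= eps -> 0 <= x -> Rbar_lt x (ell kappa alpha delta eps) ->
  Rabs (mu kappa alpha delta eps x)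
  <= Rpower mu0_coef (- / alpha) * Rpower (1 + x) (- / alpha).
Proof.
  intros he hx hl; destruct (mu_spec eps x he hx hl) as [hxi _].
  rewrite Rabs_left, <- (Rpower_1 (- mu kappa alpha delta eps x)) by lra.
  replace (- / alpha) with (- (1 / alpha)) by (unfold Rdiv; ring).
  apply Rpower_opp_mu_le; auto; lra.
Qed.

Lemma Derive_H0_neg xi : xi < 0 ->
  Derive (H kappa alpha 0) xi = - (kappa * (1 + alpha) * Rpower (- xi) alpha).
Proof.
  intros hxi; apply is_derive_unique.
  apply (is_derive_ext_loc (fun s => kappa * Rpower (- s) (1 + alpha))).
  - apply (filter_imp (fun s => s < 0)); [|exact (open_lt 0 xi hxi)].
    intros s hs; unfold H; rewrite powabs_neg, Rplus_0_r by auto; reflexivity.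
  - pose proof (is_derive_scal _ xi kappa _ (is_derive_Rpower_opp (1 + alpha) xi hxi)) as hd.
    replace (1 + alpha - 1) with alpha in hd by ring.
    replace (- (kappa * (1 + alpha) * Rpower (- xi) alpha))
      with (kappa * - ((1 + alpha) * Rpower (- xi) alpha)) by ring; exact hd.
Qed.

Lemma Rabs_Derive_H0_mu_le eps (x : R) :
  0 <= eps -> 0 <= x -> Rbar_lt x (ell kappa alpha delta eps) ->
  Rabs (Derive (H kappa alpha 0) (mu kappa alpha delta eps x))
  <= kappa * (1 + alpha) * Rpower mu0_coef (- 1) * Rpower (1 + x) (- 1).
Proof.
  intros he hx hl; destruct (mu_spec eps x he hx hl) as [hxi _].
  rewrite Derive_H0_neg, Rabs_Ropp, Rabs_pos_eq by
    (lra || (apply Rmult_le_pos; [nra | left; apply Rpower_pos])).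
  rewrite (Rmult_assoc (kappa * (1 + alpha))); apply Rmult_le_compat_l; [nra|].
  replace (- 1) with (- (alpha / alpha)) by (field; lra).
  apply Rpower_opp_mu_le; auto; lra.
Qed.

Lemma rho0_le xi : delta <= xi < 0 ->
  rho kappa alpha delta 0 xi <= Rpower (- xi) (- alpha) / (alpha * kappa).
Proof.
  intros hxi; rewrite rho0_eq by auto; pose proof (Rpower_pos (- delta) (- alpha)).
  unfold Rdiv; apply Rmult_le_compat_r; [left; apply Rinv_0_lt_compat; nra | lra].
Qed.

(* Below [-t] compare with [rho_0]; on [[-t, 0)] the integrand is at most [1/eps]. *)
Lemma rho_le_split eps t xi : 0 < eps -> 0 < t <= - delta -> delta <= xi < 0 ->
  rho kappa alpha delta eps xi <= Rpower t (- alpha) / (alpha * kappa) + t / eps.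
Proof.
  intros he ht hxi.
  assert (ht0 : 0 <= t / eps) by (unfold Rdiv; pose proof (Rinv_0_lt_compat _ he); nra).
  assert (hfar : forall s, delta <= s <= - t -> s < 0 ->
            rho kappa alpha delta eps s <= Rpower t (- alpha) / (alpha * kappa)).
  { intros s hs hs0; apply Rle_trans with (rho kappa alpha delta 0 s);
      [apply rho_le_rho0; lra|].
    apply Rle_trans with (1 := rho0_le s ltac:(lra)); unfold Rdiv.
    apply Rmult_le_compat_r; [left; apply Rinv_0_lt_compat; nra|].
    apply Rpower_Ropp_le_contravar; lra. }
  destruct (Rle_or_lt xi (- t)) as [h|h]; [pose proof (hfar xi ltac:(lra) ltac:(lra)); lra|].
  pose proof (rho_sub eps (- t) xi ltac:(lra) (or_intror he)) as e.
  pose proof (hfar (- t) ltac:(lra) ltac:(lra)) as hmt.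
  assert (hnear : RInt (fun s => / H kappa alpha eps s) (- t) xi <= t / eps).
  { apply Rle_trans with (/ eps * (xi - - t)).
    - apply RInt_le_const; [lra | apply ex_RInt_Rinv_H; lra |].
      intros s _; apply Rinv_H_le, he.
    - unfold Rdiv; pose proof (Rinv_0_lt_compat _ he); nra. }
  lra.
Qed.

Definition ell_coef := / (alpha * kappa) + 1.

Lemma ell_coef_pos : 0 < ell_coef.
Proof. unfold ell_coef; pose proof (Rinv_0_lt_compat (alpha * kappa)); nra. Qed.

Lemma lt_ell_le eps (x : R) : 0 < eps <= Rpower (- delta) (1 + alpha) ->
  Rbar_lt x (ell kappa alpha delta eps) ->
  x < ell_coef * Rpower eps (- (alpha / (1 + alpha))).
Proof.
  intros he hl; destruct (lt_ell_rho eps x ltac:(lra) hl) as [xi [hxi hr]].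
  set (t := Rpower eps (/ (1 + alpha))).
  assert (ht : 0 < t <= - delta).
  { split; [apply Rpower_pos|].
    rewrite <- (Rpower_Rpower_inv (- delta) (1 + alpha)) by lra.
    apply Rle_Rpower_l; [left; apply Rinv_0_lt_compat|]; lra. }
  pose proof (rho_le_split eps t xi ltac:(lra) ht ltac:(lra)) as hs.
  replace (Rpower t (- alpha)) with (Rpower eps (- (alpha / (1 + alpha)))) in hs
    by (unfold t; rewrite Rpower_mult; f_equal; field; lra).
  replace (t / eps) with (Rpower eps (- (alpha / (1 + alpha)))) in hs.
  - unfold ell_coef; lra.
  - unfold t, Rdiv; rewrite <- (Rpower_1 eps) at 3 by lra; rewrite <- Rpower_Ropp, <- Rpower_plus.
    f_equal; field; lra.
Qed.

Lemma le_Rpower_of_lt_Rpower eps x K q : 0 < eps <= 1 -> 0 < q -> 0 < K -> 0 <= x ->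
  x < K * Rpower eps (- q) -> eps <= Rpower (1 + K) (/ q) * Rpower (1 + x) (- / q).
Proof.
  intros he hq hK hx hlt; set (E := Rpower eps (- q)) in hlt.
  assert (hE : 1 <= E)
    by (rewrite <- (Rpower_1_l (- q)); apply Rpower_Ropp_le_contravar; lra).
  assert (hEq : Rpower E (- / q) = eps)
    by (unfold E; rewrite Rpower_mult; replace (- q * - / q) with 1 by (field; lra);
        apply Rpower_1; lra).
  assert (hmon : Rpower ((1 + K) * E) (- / q) <= Rpower (1 + x) (- / q))
    by (apply Rpower_Ropp_le_contravar; [left; apply Rinv_0_lt_compat|]; nra).
  rewrite <- Rpower_mult_distr, hEq, Rpower_Ropp in hmon by lra.
  pose proof (Rpower_pos (1 + K) (/ q)).
  apply Rmult_le_compat_l with (r := Rpower (1 + K) (/ q)) in hmon; [|lra].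
  rewrite <- Rmult_assoc, Rinv_r, Rmult_1_l in hmon by lra; exact hmon.
Qed.

Definition eps_threshold := Rmin 1 (Rpower (- delta) (1 + alpha)).

Lemma eps_threshold_pos : 0 < eps_threshold.
Proof. apply Rmin_pos; [lra | apply Rpower_pos]. Qed.

Lemma eps_le_decay eps (x : R) : 0 < eps <= eps_threshold -> 0 <= x ->
  Rbar_lt x (ell kappa alpha delta eps) ->
  eps <= Rpower (1 + ell_coef) (1 + / alpha) * Rpower (1 + x) (- 1 - / alpha).
Proof.
  intros he hx hl; pose proof (Rmin_l 1 (Rpower (- delta) (1 + alpha))).
  pose proof (Rmin_r 1 (Rpower (- delta) (1 + alpha))); unfold eps_threshold in he.
  replace (1 + / alpha) with (/ (alpha / (1 + alpha))) by (field; lra).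
  replace (- 1 - / alpha) with (- / (alpha / (1 + alpha))) by (field; lra).
  apply le_Rpower_of_lt_Rpower; [lra | apply Rdiv_lt_0_compat; lra | apply ell_coef_pos | auto |].
  apply lt_ell_le; auto; lra.
Qed.

Lemma Rabs_H_mu_le eps (x : R) : 0 <= eps <= eps_threshold -> 0 <= x ->
  Rbar_lt x (ell kappa alpha delta eps) ->
  Rabs (H kappa alpha eps (mu kappa alpha delta eps x))
  <= (kappa * Rpower mu0_coef (- 1 - / alpha) + Rpower (1 + ell_coef) (1 + / alpha))
     * Rpower (1 + x) (- 1 - / alpha).
Proof.
  intros he hx hl; destruct (mu_spec eps x ltac:(lra) hx hl) as [hxi _].
  rewrite Rabs_pos_eq by (left; apply H_pos; lra).
  unfold H; rewrite powabs_neg by lra.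
  pose proof (Rpower_opp_mu_le eps x (1 + alpha) ltac:(lra) hx hl ltac:(lra)) as hmu.
  replace (- ((1 + alpha) / alpha)) with (- 1 - / alpha) in hmu by (field; lra).
  assert (heps : eps <= Rpower (1 + ell_coef) (1 + / alpha) * Rpower (1 + x) (- 1 - / alpha)).
  { destruct (Rle_lt_or_eq_dec 0 eps ltac:(lra)) as [hpos| <-]; [apply eps_le_decay; auto; lra|].
    pose proof (Rpower_pos (1 + ell_coef) (1 + / alpha));
      pose proof (Rpower_pos (1 + x) (- 1 - / alpha)); nra. }
  nra.
Qed.

Lemma rho0_sub_rho_le eps eta xi : 0 <= eps -> 0 < eta -> delta <= xi <= - eta ->
  rho kappa alpha delta 0 xi - rho kappa alpha delta eps xi
  <= eps * (- delta) / (kappa * Rpower eta (1 + alpha)) ^ 2.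
Proof.
  intros he heta hxi; set (b := kappa * Rpower eta (1 + alpha)).
  assert (hb : 0 < b) by (unfold b; pose proof (Rpower_pos eta (1 + alpha)); nra).
  unfold rho.
  assert (hex : forall e, 0 <= e -> ex_RInt (fun s => / H kappa alpha e s) delta xi)
    by (intros e he'; apply ex_RInt_Rinv_H; lra).
  pose proof (RInt_minus (V := R_CompleteNormedModule) _ _ _ _
                (hex 0 (Rle_refl 0)) (hex eps he)) as e.
  unfold minus, plus, opp in e; simpl in e; unfold Rminus at 1; rewrite <- e; clear e.
  apply Rle_trans with (eps / (b * b) * (xi - delta)).
  - apply RInt_le_const; [lra | exact (ex_RInt_minus _ _ _ _ (hex 0 (Rle_refl 0)) (hex eps he)) |].
    intros s hs; unfold H; rewrite powabs_neg, Rplus_0_r by lra.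
    apply Rinv_sub_le; auto; split; auto.
    apply Rmult_le_compat_l; [lra | apply Rle_Rpower_l; lra].
  - simpl; rewrite Rmult_1_r; unfold Rdiv.
    assert (0 <= eps * / (b * b))
      by (apply Rmult_le_pos; [lra | left; apply Rinv_0_lt_compat; nra]).
    nra.
Qed.

Lemma mu_uniform_convergence eta : 0 < eta ->
  exists e1, 0 < e1 /\
    forall eps, 0 < eps < e1 -> forall x : R, 0 <= x -> Rbar_lt x (ell kappa alpha delta eps) ->
      Rabs (mu kappa alpha delta eps x - mu kappa alpha delta 0 x) <= eta.
Proof.
  intros heta; set (b := kappa * Rpower eta (1 + alpha)).
  assert (hb0 : 0 < b) by (apply Rmult_lt_0_compat; [lra | apply Rpower_pos]).
  assert (hb : 0 < b ^ 2) by (apply pow_lt, hb0).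
  pose proof (Hbound_pos 1 ltac:(lra)) as hH1.
  set (q := eta * b ^ 2 / (- delta * Hbound 1)).
  assert (hq : 0 < q) by (apply Rdiv_lt_0_compat; nra).
  exists (Rmin 1 q); split; [apply Rmin_pos; lra|].
  intros eps [he he1] x hx hl; pose proof (Rmin_l 1 q); pose proof (Rmin_r 1 q).
  pose proof (mu0_le_mu eps x ltac:(lra) hx hl); pose proof (mu0_range x hx).
  destruct (mu_spec eps x ltac:(lra) hx hl) as [hxi e].
  rewrite mu0_eq, Rabs_pos_eq by lra.
  destruct (Rle_or_lt (mu0 x) (- eta)) as [hfar|]; [|lra].
  pose proof (rho_sub_ge eps (mu0 x) (mu kappa alpha delta eps x) ltac:(lra) ltac:(lra) ltac:(lra))
    as hslope.
  pose proof (rho0_sub_rho_le eps eta (mu0 x) ltac:(lra) heta ltac:(lra)) as hgap.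
  rewrite rho0_mu0 in hgap by auto; fold b in hgap; rewrite e in hslope.
  pose proof (Hbound_pos eps ltac:(lra)) as hHe.
  assert (hHle : Hbound eps <= Hbound 1) by (unfold Hbound; lra).
  assert (hepsq : eps * - delta * Hbound 1 <= eta * b ^ 2).
  { replace (eta * b ^ 2) with (q * (- delta * Hbound 1)) by (unfold q; field; lra).
    rewrite Rmult_assoc; apply Rmult_le_compat_r; nra. }
  replace (mu kappa alpha delta eps x - mu0 x)
    with (Hbound eps * ((mu kappa alpha delta eps x - mu0 x) / Hbound eps)) by (field; lra).
  apply Rle_trans with (Hbound eps * (eps * - delta / b ^ 2)); [apply Rmult_le_compat_l; lra|].
  replace eta with (eta * b ^ 2 / b ^ 2) by (field; lra).
  replace (Hbound eps * (eps * - delta / b ^ 2)) with (Hbound eps * eps * - delta / b ^ 2)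
    by (field; lra).
  unfold Rdiv; apply Rmult_le_compat_r; [left; apply Rinv_0_lt_compat; lra|].
  apply Rle_trans with (2 := hepsq).
  replace (eps * - delta * Hbound 1) with (Hbound 1 * (eps * - delta)) by ring.
  rewrite Rmult_assoc; apply Rmult_le_compat_r; nra.
Qed.

End Profile.

Theorem lemma3p1 (kappa alpha delta : R)
  (hkappa : 0 < kappa) (halpha : 0 < alpha) (hdelta : delta < 0) :
  (forall eta : R, 0 < eta ->
     exists e1 : R, 0 < e1 /\
       forall eps : R, 0 < eps < e1 ->
         forall x : R, 0 <= x -> Rbar_lt (Finite x) (ell kappa alpha delta eps) ->
           Rabs (mu kappa alpha delta eps x - mu kappa alpha delta 0 x) <= eta)
  /\
  (exists eps0 C1 C2 C3 : R,
     0 < eps0 /\ 0 < C1 /\ 0 < C2 /\ 0 < C3 /\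
     forall eps : R, 0 <= eps <= eps0 ->
       forall x : R, 0 <= x -> Rbar_lt (Finite x) (ell kappa alpha delta eps) ->
         Rabs (mu kappa alpha delta eps x) <= C1 * Rpower (1 + x) (- / alpha) /\
         Rabs (H kappa alpha eps (mu kappa alpha delta eps x))
           <= C2 * Rpower (1 + x) (- 1 - / alpha) /\
         Rabs (Derive (H kappa alpha 0) (mu kappa alpha delta eps x))
           <= C3 * Rpower (1 + x) (- 1)).
Proof.
  split; [apply mu_uniform_convergence; auto|].
  set (m := mu0_coef kappa alpha delta).
  exists (eps_threshold alpha delta), (Rpower m (- / alpha)),
    (kappa * Rpower m (- 1 - / alpha) + Rpower (1 + ell_coef kappa alpha) (1 + / alpha)),
    (kappa * (1 + alpha) * Rpower m (- 1)).
  pose proof (Rpower_pos m (- 1 - / alpha)) as hm2; pose proof (Rpower_pos m (- 1)) as hm3.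
  pose proof (Rpower_pos (1 + ell_coef kappa alpha) (1 + / alpha)) as hell.
  split; [apply eps_threshold_pos; auto|]; split; [apply Rpower_pos|]; split; [nra|].
  split; [apply Rmult_lt_0_compat; nra|].
  intros eps he x hx hl; repeat split.
  - apply Rabs_mu_le; auto; lra.
  - apply Rabs_H_mu_le; auto.
  - apply Rabs_Derive_H0_mu_le; auto; lra.
Qed.
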